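(* Let $n\ge 2k\ge 2$, let $S\subseteq\{0,1,\ldots,k-1\}$ be nonempty, and let $X=\bigcup_{i\in S}J(n,k,i)$ (the graph on the $k$-subsets of $\{1,\ldots,n\}$ in which $A\sim B$ iff $|A\cap B|\in S$). If there is perfect state transfer in $X$ between two distinct vertices $A$ and $B$, then $B=\{1,\ldots,n\}\setminus A$.
   Context: $J(n,k,i)$ is the graph on the $k$-subsets of $\{1,\ldots,n\}$ with $A\sim B$ iff $|A\cap B|=i$. For a simple graph $X$ with adjacency matrix $A$, let $\mathcal{H}_X(t)=e^{itA}$; there is perfect state transfer between vertices $u\ne v$ if $|\mathcal{H}_X(\tau)_{u,v}|=1$ for some $\tau>0$. *)

From HB Require Import structures.
From Stdlib Require Import Reals.
From mathcomp Require Import all_boot.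
Set Implicit Arguments. Unset Strict Implicit. Unset Printing Implicit Defensive.

Definition jvert (n k : nat) := {A : {set 'I_n} | #|A| == k}.

Definition jadj (n k : nat) (S : seq nat) : rel (jvert n k) :=
  fun A B => #|val A :&: val B| \in S.

(* (A^m)_{uv} for the adjacency matrix A of the graph (T,e): number of walks. *)
Fixpoint walks (T : finType) (e : rel T) (m : nat) (u v : T) : nat :=
  match m with
  | 0 => nat_of_bool (u == v)
  | m'.+1 => \sum_(w : T | e u w) walks e m' w v
  end.

Local Open Scope R_scope.

(* e^{itA}_{uv} = sum_m (i t)^m / m! (A^m)_{uv}; real and imaginary parts of the m-th term. *)
Definition ctqw_re_term (T : finType) (e : rel T) (t : R) (u v : T) (m : nat) : R :=
  if odd m then 0
  else pow (-1) (m./2) * pow t m / INR (m`!) * INR (walks e m u v).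

Definition ctqw_im_term (T : finType) (e : rel T) (t : R) (u v : T) (m : nat) : R :=
  if odd m then pow (-1) (m./2) * pow t m / INR (m`!) * INR (walks e m u v)
  else 0.

Definition pst (T : finType) (e : rel T) (u v : T) : Prop :=
  u <> v /\
  exists tau : R, 0 < tau /\
    exists re im : R,
      infinite_sum (ctqw_re_term e tau u v) re /\
      infinite_sum (ctqw_im_term e tau u v) im /\
      re * re + im * im = 1.

(* If a graph automorphism f fixes w, then for every vertex u the amplitudes
   H(t)_{u,w} and H(t)_{f u,w} coincide, since the powers of the adjacency
   matrix are f-invariant.  The column of w in the unitary H(t) has norm 1,
   so |H(t)_{u,w}| = 1 forces every other entry of that column to vanish,
   hence f u = u: perfect state transfer from u to w is only possible if
   every automorphism fixing w fixes u.  In the union of Johnson graphs every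
   permutation of the ground set is an automorphism, and if B is neither A
   nor its complement there are x in A and y outside A lying on the same side
   of B; the transposition (x y) then fixes B and moves A. *)

From Coquelicot Require Import Coquelicot.
From HB Require Import structures.
From Stdlib Require Import Reals Lra.
From mathcomp Require Import all_boot perm zify Rstruct.

Set Implicit Arguments. Unset Strict Implicit. Unset Printing Implicit Defensive.

Local Open Scope R_scope.

Lemma fact_factorial m : Factorial.fact m = m`!.
Proof. by elim: m => [|m IH] //=; rewrite factS -IH. Qed.

Lemma INR_fact_gt0 m : 0 < INR m`!.
Proof. by rewrite -fact_factorial; apply: INR_fact_lt_0. Qed.

Lemma Rabs_lt_CV_radius (a : nat -> R) t :
  (forall r, CV_disk a r) -> Rbar_lt (Rabs t) (CV_radius a).
Proof.
move=> Ha; have [ub_lub _] := Lub_Rbar_correct (CV_disk a).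
have := ub_lub (Rabs t + 1) (Ha _); rewrite /CV_radius.
by case: (Lub_Rbar (CV_disk a)) => //= l; lra.
Qed.

Lemma big_Ropp (I : Type) (r : seq I) (P : pred I) (F : I -> R) :
  \big[Rplus/0]_(i <- r | P i) - F i = - \big[Rplus/0]_(i <- r | P i) F i.
Proof. by rewrite (big_morph Ropp Ropp_plus_distr Ropp_0). Qed.

Lemma is_pseries_bigsum (I : eqType) (r : seq I) (P : pred I)
    (a : I -> nat -> R) t :
  (forall i, ex_pseries (a i) t) ->
  is_pseries (fun m => \big[Rplus/0]_(i <- r | P i) a i m) t
             (\big[Rplus/0]_(i <- r | P i) PSeries (a i) t).
Proof.
move=> Ha; elim: r => [|i r IH].
  rewrite big_nil; apply/is_pseries_R.
  apply: (is_series_ext (fun _ => 0)) => [m|]; first by rewrite big_nil Rmult_0_l.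
  apply/is_series_Reals => eps eps_gt0; exists 0%N => m _.
  by rewrite /R_dist sum_cte Rmult_0_l Rminus_0_r Rabs_R0.
rewrite big_cons; apply/is_pseries_R; case Pi: (P i).
  apply: (is_series_ext
    (fun m => plus (a i m * t ^ m) (\big[Rplus/0]_(j <- r | P j) a j m * t ^ m))).
    by move=> m; rewrite big_cons Pi /plus /=; ring.
  by apply: is_series_plus; apply/is_pseries_R; [apply: PSeries_correct|].
apply: (is_series_ext (fun m => \big[Rplus/0]_(j <- r | P j) a j m * t ^ m)).
  by move=> m; rewrite big_cons Pi.
exact/is_pseries_R.
Qed.

Lemma PSeries_bigsum (I : eqType) (r : seq I) (P : pred I)
    (a : I -> nat -> R) t :
  (forall i, ex_pseries (a i) t) ->
  PSeries (fun m => \big[Rplus/0]_(i <- r | P i) a i m) t =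
  \big[Rplus/0]_(i <- r | P i) PSeries (a i) t.
Proof. by move=> Ha; apply: is_pseries_unique; apply: is_pseries_bigsum. Qed.

Lemma is_derive_bigsum (I : eqType) (r : seq I) (f : I -> R -> R)
    (df : I -> R) t :
  (forall i, is_derive (f i) t (df i)) ->
  is_derive (fun t => \big[Rplus/0]_(i <- r) f i t) t (\big[Rplus/0]_(i <- r) df i).
Proof.
move=> Hf; elim: r => [|i r IH].
  rewrite big_nil; apply: (is_derive_ext (fun _ => 0)); last exact: is_derive_const.
  by move=> s; rewrite big_nil.
rewrite big_cons; apply: (is_derive_ext (fun s => plus (f i s) (\big[Rplus/0]_(j <- r) f j s))).
  by move=> s; rewrite big_cons.
exact: is_derive_plus.
Qed.

Lemma walks_le_expn (T : finType) (e : rel T) m u v :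
  (walks e m u v <= #|T| ^ m)%N.
Proof.
elim: m u => [|m IH] u /=; first by case: (u == v).
apply: (@leq_trans (\sum_(x : T | e u x) #|T| ^ m)%N).
  by apply: leq_sum => x _.
by rewrite sum_nat_const expnS leq_mul2r max_card orbT.
Qed.

Lemma walks_inj_morph (T : finType) (e : rel T) (f : T -> T) :
  injective f -> (forall x y, e (f x) (f y) = e x y) ->
  forall m u v, walks e m (f u) (f v) = walks e m u v.
Proof.
move=> f_inj fe; elim=> [|m IH] u v /=; first by rewrite (inj_eq f_inj).
rewrite (reindex_inj f_inj) /=.
by apply: eq_big => x; rewrite ?fe ?IH.
Qed.

Section ColumnOfTheEvolution.

Variables (T : finType) (e : rel T) (w : T).

(* The real and imaginary parts of H(t)_{u,w} are the power series in t with
   the coefficients below; the factor t^m of ctqw_re_term is kept out. *)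
Definition re_coef u m : R :=
  if odd m then 0 else (-1) ^ m./2 / INR m`! * INR (walks e m u w).
Definition im_coef u m : R :=
  if odd m then (-1) ^ m./2 / INR m`! * INR (walks e m u w) else 0.

Definition ctqw_re u t := PSeries (re_coef u) t.
Definition ctqw_im u t := PSeries (im_coef u) t.

Lemma CV_disk_walks_bounded (a : nat -> R) u r :
  (forall m, Rabs (a m) <= / INR m`! * INR (walks e m u w)) -> CV_disk a r.
Proof.
move=> Ha; have [l Hl] := exist_exp (INR #|T| * Rabs r).
apply: (ex_series_le _ (fun m => / INR (Factorial.fact m) * (INR #|T| * Rabs r) ^ m));
  last by exists l; apply/is_series_Reals.
move=> m; rewrite /norm /= /abs /= Rabs_Rabsolu Rabs_mult -RPow_abs.
rewrite Rpow_mult_distr fact_factorial -Rmult_assoc.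
apply: Rmult_le_compat_r; first by apply: pow_le; apply: Rabs_pos.
apply: (Rle_trans _ _ _ (Ha m)); apply: Rmult_le_compat_l.
  exact/Rlt_le/Rinv_0_lt_compat/INR_fact_gt0.
rewrite -pow_INR; apply/le_INR/leP.
have -> : Nat.pow #|T| m = (#|T| ^ m)%N by elim: m {Ha} => //= m ->; rewrite expnS.
exact: walks_le_expn.
Qed.

Lemma Rabs_walk_term j m u :
  Rabs ((-1) ^ j / INR m`! * INR (walks e m u w)) = / INR m`! * INR (walks e m u w).
Proof.
rewrite Rabs_mult /Rdiv Rabs_mult pow_1_abs Rmult_1_l.
rewrite Rabs_pos_eq; last exact/Rlt_le/Rinv_0_lt_compat/INR_fact_gt0.
by rewrite Rabs_pos_eq //; apply: pos_INR.
Qed.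

Lemma walks_term_ge0 m u : 0 <= / INR m`! * INR (walks e m u w).
Proof.
by apply: Rmult_le_pos; [apply/Rlt_le/Rinv_0_lt_compat/INR_fact_gt0 | apply: pos_INR].
Qed.

Lemma CV_disk_re_coef u r : CV_disk (re_coef u) r.
Proof.
apply: (CV_disk_walks_bounded (u := u)) => m; rewrite /re_coef.
by case: (odd m); rewrite ?Rabs_R0 ?Rabs_walk_term; [apply: walks_term_ge0|lra].
Qed.

Lemma CV_disk_im_coef u r : CV_disk (im_coef u) r.
Proof.
apply: (CV_disk_walks_bounded (u := u)) => m; rewrite /im_coef.
by case: (odd m); rewrite ?Rabs_R0 ?Rabs_walk_term; [lra|apply: walks_term_ge0].
Qed.

Lemma INR_walksS m u :
  INR (walks e m.+1 u w) = \big[Rplus/0]_(x | e u x) INR (walks e m x w).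
Proof. by apply: (big_morph INR) => //; apply: plus_INR. Qed.

Lemma PS_derive_walk_term m u :
  INR m.+1 * ((-1) ^ uphalf m / INR m.+1`! * INR (walks e m.+1 u w)) =
  (-1) ^ odd m * \big[Rplus/0]_(x | e u x) ((-1) ^ m./2 / INR m`! * INR (walks e m x w)).
Proof.
rewrite INR_walksS -big_distrr [RHS]/= uphalf_half pow_add factS mult_INR.
have := INR_fact_gt0 m; have : INR m.+1 <> 0 by apply: not_0_INR.
by move=> *; field; lra.
Qed.

(* The Schroedinger equation for the column of w, coefficientwise. *)
Lemma PS_derive_re_coef u m :
  PS_derive (re_coef u) m = \big[Rplus/0]_(x | e u x) - im_coef x m.
Proof.
rewrite /PS_derive /re_coef /im_coef oddS -uphalfE.
case: ifP => [/negbTE|/negbFE] Hm; rewrite Hm.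
  by rewrite Rmult_0_r big1 // => x _; lra.
rewrite PS_derive_walk_term Hm big_Ropp /=; ring.
Qed.

Lemma PS_derive_im_coef u m :
  PS_derive (im_coef u) m = \big[Rplus/0]_(x | e u x) re_coef x m.
Proof.
rewrite /PS_derive /re_coef /im_coef oddS -uphalfE.
case: ifP => [/negbTE|/negbFE] Hm; rewrite Hm.
  by rewrite PS_derive_walk_term Hm /=; ring.
by rewrite Rmult_0_r big1 // => x _; lra.
Qed.

Lemma is_derive_ctqw_re u t :
  is_derive (ctqw_re u) t (\big[Rplus/0]_(x | e u x) - ctqw_im x t).
Proof.
have := is_derive_PSeries (re_coef u) t (Rabs_lt_CV_radius t (CV_disk_re_coef u)).
rewrite (PSeries_ext _ _ _ (PS_derive_re_coef u)) PSeries_bigsum.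
  by congr is_derive; apply: eq_bigr => x _; rewrite PSeries_opp.
by move=> x; apply: (ex_pseries_opp (im_coef x)); apply/CV_disk_correct/CV_disk_im_coef.
Qed.

Lemma is_derive_ctqw_im u t :
  is_derive (ctqw_im u) t (\big[Rplus/0]_(x | e u x) ctqw_re x t).
Proof.
have := is_derive_PSeries (im_coef u) t (Rabs_lt_CV_radius t (CV_disk_im_coef u)).
rewrite (PSeries_ext _ _ _ (PS_derive_im_coef u)) PSeries_bigsum //.
by move=> x; apply/CV_disk_correct/CV_disk_re_coef.
Qed.

Lemma infinite_sum_ctqw_re t u r :
  infinite_sum (ctqw_re_term e t u w) r -> r = ctqw_re u t.
Proof.
move/uniqueness_sum; apply; apply/is_series_Reals.
have := PSeries_correct _ _ (CV_disk_correct _ _ (CV_disk_re_coef u t)).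
move/is_pseries_R; apply: is_series_ext => m.
by rewrite /ctqw_re_term /re_coef; case: (odd m) => /=; rewrite /Rdiv; ring.
Qed.

Lemma infinite_sum_ctqw_im t u r :
  infinite_sum (ctqw_im_term e t u w) r -> r = ctqw_im u t.
Proof.
move/uniqueness_sum; apply; apply/is_series_Reals.
have := PSeries_correct _ _ (CV_disk_correct _ _ (CV_disk_im_coef u t)).
move/is_pseries_R; apply: is_series_ext => m.
by rewrite /ctqw_im_term /im_coef; case: (odd m) => /=; rewrite /Rdiv; ring.
Qed.

Hypothesis e_sym : symmetric e.

Definition column_norm t :=
  \big[Rplus/0]_(u : T) (ctqw_re u t * ctqw_re u t + ctqw_im u t * ctqw_im u t).

Lemma sum_adj_antisym (g : T -> T -> R) :
  (forall u x, g x u = - g u x) ->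
  \big[Rplus/0]_(u : T) \big[Rplus/0]_(x | e u x) g u x = 0.
Proof.
move=> g_anti; set s := LHS; suff : s = - s by lra.
rewrite {1}/s (exchange_big_dep predT) //= /s -big_Ropp.
apply: eq_bigr => x _; rewrite -big_Ropp.
by apply: eq_big => [u|u _]; [rewrite e_sym | rewrite g_anti].
Qed.

Lemma is_derive_column_norm t : is_derive column_norm t 0.
Proof.
pose g u x := ctqw_im u t * ctqw_re x t - ctqw_re u t * ctqw_im x t.
have d_term u : is_derive
    (fun s => ctqw_re u s * ctqw_re u s + ctqw_im u s * ctqw_im u s) t
    (2 * \big[Rplus/0]_(x | e u x) g u x).
  have := is_derive_plus _ _ _ _ _
    (is_derive_mult _ _ _ _ _ (is_derive_ctqw_re u t) (is_derive_ctqw_re u t) Rmult_comm)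
    (is_derive_mult _ _ _ _ _ (is_derive_ctqw_im u t) (is_derive_ctqw_im u t) Rmult_comm).
  rewrite /plus /mult /=; congr is_derive.
  rewrite !big_distrl !big_distrr -!big_split /=.
  by apply: eq_bigr => x _; rewrite /g; ring.
rewrite -(Rmult_0_r 2) -(@sum_adj_antisym g) => [|u x]; last by rewrite /g; ring.
by rewrite big_distrr /=; apply: is_derive_bigsum.
Qed.

Lemma column_norm0 : column_norm 0 = 1.
Proof.
rewrite /column_norm (bigD1 w) //= big1 => [|u Hu].
  by rewrite /ctqw_re /ctqw_im !PSeries_0 /re_coef /im_coef /= eqxx /=; lra.
by rewrite /ctqw_re /ctqw_im !PSeries_0 /re_coef /im_coef /= (negbTE Hu) /=; lra.
Qed.

Lemma column_norm_const t : column_norm t = 1.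
Proof.
rewrite -column_norm0.
have const_on a b : a < b -> column_norm a = column_norm b.
  by apply: eq_is_derive => s _; apply: is_derive_column_norm.
by case: (Rtotal_order t 0) => [/const_on|[->|/const_on <-]].
Qed.

Lemma pst_twin_free u u' :
  u' != u -> (forall m, walks e m u' w = walks e m u w) -> ~ pst e u w.
Proof.
move=> u'u walks_eq [_ [t [_ [re [im [Hre [Him Hnorm]]]]]]].
have same_re : ctqw_re u' t = ctqw_re u t
  by apply: PSeries_ext => m; rewrite /re_coef walks_eq.
have same_im : ctqw_im u' t = ctqw_im u t
  by apply: PSeries_ext => m; rewrite /im_coef walks_eq.
have := column_norm_const t.
rewrite /column_norm (bigD1 u) //= (bigD1 u') //= same_re same_im.
rewrite -(infinite_sum_ctqw_re Hre) -(infinite_sum_ctqw_im Him).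
have : 0 <= \big[Rplus/0]_(x | (x != u) && (x != u'))
             (ctqw_re x t * ctqw_re x t + ctqw_im x t * ctqw_im x t).
  by apply: (big_ind (fun x => 0 <= x)) => [|*|x _]; [lra|lra|nra].
lra.
Qed.

End ColumnOfTheEvolution.

Lemma pst_autom_fixed (T : finType) (e : rel T) (f : T -> T) u w :
  symmetric e -> injective f -> (forall x y, e (f x) (f y) = e x y) ->
  f w = w -> pst e u w -> f u = u.
Proof.
move=> e_sym f_inj fe fw Hpst; case: (eqVneq (f u) u) => // fu_u; exfalso.
apply: (pst_twin_free e_sym fu_u _ Hpst) => m.
by rewrite -{1}fw walks_inj_morph.
Qed.

Lemma exists_swap_fixing (T : finType) (A B : {set T}) :
  A != set0 -> ~: A != set0 -> B != A -> B != ~: A ->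
  exists x y, [/\ x \in A, y \notin A & (x \in B) = (y \in B)].
Proof.
case/set0Pn=> a aA /set0Pn[b]; rewrite in_setC => bA BA BAc.
have [/existsP[x /existsP[y /and3P[xA yA /eqP xyB]]] | /existsPn sep] :=
  boolP [exists x, exists y, [&& x \in A, y \notin A & (x \in B) == (y \in B)]].
  by exists x, y.
have split_B x y : x \in A -> y \notin A -> (x \in B) = ~~ (y \in B).
  move=> xA yA; move/existsPn: (sep x) => /(_ y); rewrite xA yA /=.
  by case: (x \in B); case: (y \in B).
have {}sep z : (z \in B) = (z \in A) (+) ~~ (a \in B).
  case: (boolP (z \in A)) => zA /=.
    by rewrite (split_B z b) // (split_B a b) //; case: (b \in B).
  by rewrite (split_B a z) // negbK.
exfalso; case aB: (a \in B); [move/eqP: BA | move/eqP: BAc]; apply; apply/setP => z;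
  by rewrite sep aB ?in_setC ?addbF ?addbT.
Qed.

Definition jmap n k (p : {perm 'I_n}) (C : jvert n k) : jvert n k.
Proof. by exists (p @: val C); rewrite card_imset; [exact: (valP C)|exact: perm_inj]. Defined.

Lemma jmap_inj n k (p : {perm 'I_n}) : injective (@jmap n k p).
Proof. by move=> C D /(congr1 val) /(imset_inj (@perm_inj _ p)) /val_inj. Qed.

Lemma jadj_sym n k S : symmetric (@jadj n k S).
Proof. by move=> C D; rewrite /jadj setIC. Qed.

Lemma jadj_jmap n k S (p : {perm 'I_n}) (C D : jvert n k) :
  jadj S (jmap p C) (jmap p D) = jadj S C D.
Proof.
rewrite /jadj /= -imsetI; last by move=> ? ? _ _; apply: perm_inj.
by rewrite card_imset //; apply: perm_inj.
Qed.

Lemma mem_imset_tperm n (x y z : 'I_n) (C : {set 'I_n}) :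
  (z \in tperm x y @: C) = (tperm x y z \in C).
Proof. by rewrite -{1}(tpermK x y z) mem_imset //; apply: perm_inj. Qed.

Theorem mainTheorem16 (n k : nat) (S : seq nat) :
  (1 <= k)%N -> (2 * k <= n)%N ->
  S != [::] -> all (fun i => (i < k)%N) S ->
  forall A B : jvert n k, A <> B ->
  pst (jadj S) A B -> val B = ~: val A.
Proof.
move=> k_gt0 le2k_n _ _ A B AB Hpst.
case: (eqVneq (val B) (~: val A)) => // BAc; exfalso.
have cardA : #|val A| = k by apply/eqP; apply: (valP A).
have A0 : val A != set0 by rewrite -card_gt0 cardA.
have Ac0 : ~: val A != set0.
  by rewrite -card_gt0; have := cardsC (val A); rewrite card_ord cardA; lia.
have BA : val B != val A by apply: contra_not_neq AB => /val_inj.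
have [x [y [xA yA xyB]]] := exists_swap_fixing A0 Ac0 BA BAc.
have fixB : jmap (tperm x y) B = B.
  by apply/val_inj/setP => z; rewrite mem_imset_tperm; case: tpermP => // ->.
have := pst_autom_fixed (@jadj_sym n k S) (@jmap_inj _ _ _)
  (@jadj_jmap n k S (tperm x y)) fixB Hpst.
move/(congr1 (fun C : jvert n k => x \in val C)).
by rewrite /= mem_imset_tperm tpermL (negbTE yA) xA.
Qed.
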